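(* Let $k,D,s^{\mathrm{in}}>0$, let $K_1,\dots,K_5>0$, and let $\mu:[0,\infty)\to[0,\infty)$ satisfy $\mu(0)=0$, $\mu(s)>0$ for $s>0$, $\mu\le\mu_{\max}<\infty$, and be continuous at $0$. For $x=(b,s)^*\in\mathbb{R}_+^2$ define the rates $$\lambda_1(x)=K_1\mu(s)b,\quad \lambda_2(x)=K_2k\mu(s)b,\quad \lambda_3(x)=K_3Ds^{\mathrm{in}},\quad \lambda_4(x)=K_4Db,\quad \lambda_5(x)=K_5Ds,$$ the state-dependent jumps $$\nu_1(x)=\begin{pmatrix}\frac1{K_1}\\0\end{pmatrix},\ \nu_2(x)=-\begin{pmatrix}0\\ \frac{1\wedge K_2 s}{K_2}\end{pmatrix},\ \nu_3(x)=\begin{pmatrix}0\\ \frac1{K_3}\end{pmatrix},\ \nu_4(x)=-\begin{pmatrix}\frac{1\wedge K_4 b}{K_4}\\0\end{pmatrix},\ \nu_5(x)=-\begin{pmatrix}0\\ \frac{1\wedge K_5 s}{K_5}\end{pmatrix},$$ and the constant jumps $$\nu_1=\begin{pmatrix}\frac1{K_1}\\0\end{pmatrix},\ \nu_2=-\begin{pmatrix}0\\ \frac1{K_2}\end{pmatrix},\ \nu_3=\begin{pmatrix}0\\ \frac1{K_3}\end{pmatrix},\ \nu_4=-\begin{pmatrix}\frac1{K_4}\\0\end{pmatrix},\ \nu_5=-\begin{pmatrix}0\\ \frac1{K_5}\end{pmatrix}.$$ Let $\lambda(x)=\sum_{i=1}^5\lambda_i(x)$, $\bar\lambda_i(x)=\lambda_i(x)/\lambda(x)$,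 $f_K(x)=\sum_{i=1}^5\nu_i(x)\lambda_i(x)$, $m_K(x)=\sum_{i=1}^5\nu_i(x)\bar\lambda_i(x)$, $m(x)=\sum_{i=1}^5\nu_i\bar\lambda_i(x)$, and $$f(x)=\begin{pmatrix}\mu(s)b-Db\\ -k\mu(s)b+D(s^{\mathrm{in}}-s)\end{pmatrix}.$$ Then $|\nu_i(x)|\le|\nu_i|$ for all $i$ and $x$. Let $$\mathcal{R}_K=\Big\{x=(b,s)^*\in\mathbb{R}_+^2:\ b\le \tfrac1{K_4}\ \text{or}\ s\le\tfrac1{K_2}\ \text{or}\ s\le\tfrac1{K_5}\Big\}.$$ For $x\notin\mathcal{R}_K$ one has $\nu_i(x)=\nu_i$ for all $i$, $m_K(x)=m(x)$ and $f_K(x)=f(x)$. For all $x=(b,s)^*\in\mathbb{R}_+^2$: $$|\nu_i(x)-\nu_i|\le\frac1{\min_{j=1,\dots,5}K_j}\ (i=1,\dots,5),\qquad |m_K(x)-m(x)|\le\frac1{\min_{j=1,\dots,5}K_j},$$ $$|f_K(x)-f(x)|\le(1-K_2s)^+k\mu(s)b+(1-K_4b)^+Db+(1-K_5s)^+Ds.$$ Consequently $f_K(x)\to f(x)$ as $K_i\to\infty$ for all $i=1,\dots,5$, and this convergence is uniform on every compact subset of $(0,\infty)^2$.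
   Context: Here $|\cdot|$ is the Euclidean norm on $\mathbb{R}^2$, $a\wedge c=\min(a,c)$ and $a^+=\max(a,0)$. Note $\lambda(x)\ge K_3Ds^{\mathrm{in}}>0$, so $\bar\lambda_i$ is well defined. These objects describe a stochastic chemostat model with biomass concentration $b$ and substrate concentration $s$, dilution rate $D$, inflow substrate concentration $s^{\mathrm{in}}$, stoichiometric coefficient $k$, specific growth rate $\mu$, and scale parameters $K_i$. *)

From HB Require Import structures.
From mathcomp Require Import all_boot all_order all_algebra.
From mathcomp Require Import all_classical all_reals topology normedtype.
Import numFieldNormedType.Exports.
Set Implicit Arguments. Unset Strict Implicit. Unset Printing Implicit Defensive.
Import Order.TTheory GRing.Theory Num.Theory.
Local Open Scope ring_scope.

(* Points x = (b, s) of R^2 are pairs; x.1 = b (biomass), x.2 = s (substrate).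
   The scale parameters K_1..K_5 are the values K 1%N, ..., K 5%N of K : nat -> R. *)

Definition vnorm {R : realType} (v : R * R) : R := Num.sqrt (v.1 ^+ 2 + v.2 ^+ 2).
Definition vsub {R : realType} (u v : R * R) : R * R := (u.1 - v.1, u.2 - v.2).
Definition pospart {R : realType} (a : R) : R := Num.max a 0.

Definition lam {R : realType} (k D sin : R) (K : nat -> R) (mu : R -> R)
  (i : nat) (x : R * R) : R :=
  let b := x.1 in let s := x.2 in
  match i with
  | 1 => K 1%N * mu s * b
  | 2 => K 2%N * k * mu s * b
  | 3 => K 3%N * D * sin
  | 4 => K 4%N * D * b
  | 5 => K 5%N * D * s
  | _ => 0
  end.

Definition lamT {R : realType} (k D sin : R) (K : nat -> R) (mu : R -> R)
  (x : R * R) : R := \sum_(1 <= i < 6) lam k D sin K mu i x.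

Definition lbar {R : realType} (k D sin : R) (K : nat -> R) (mu : R -> R)
  (i : nat) (x : R * R) : R := lam k D sin K mu i x / lamT k D sin K mu x.

Definition nuK {R : realType} (K : nat -> R) (i : nat) (x : R * R) : R * R :=
  let b := x.1 in let s := x.2 in
  match i with
  | 1 => ((K 1%N)^-1, 0)
  | 2 => (0, - (Num.min 1 (K 2%N * s) / K 2%N))
  | 3 => (0, (K 3%N)^-1)
  | 4 => (- (Num.min 1 (K 4%N * b) / K 4%N), 0)
  | 5 => (0, - (Num.min 1 (K 5%N * s) / K 5%N))
  | _ => (0, 0)
  end.

Definition nu {R : realType} (K : nat -> R) (i : nat) : R * R :=
  match i with
  | 1 => ((K 1%N)^-1, 0)
  | 2 => (0, - (K 2%N)^-1)
  | 3 => (0, (K 3%N)^-1)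
  | 4 => (- (K 4%N)^-1, 0)
  | 5 => (0, - (K 5%N)^-1)
  | _ => (0, 0)
  end.

Definition fK {R : realType} (k D sin : R) (K : nat -> R) (mu : R -> R)
  (x : R * R) : R * R :=
  (\sum_(1 <= i < 6) (nuK K i x).1 * lam k D sin K mu i x,
   \sum_(1 <= i < 6) (nuK K i x).2 * lam k D sin K mu i x).

Definition mK {R : realType} (k D sin : R) (K : nat -> R) (mu : R -> R)
  (x : R * R) : R * R :=
  (\sum_(1 <= i < 6) (nuK K i x).1 * lbar k D sin K mu i x,
   \sum_(1 <= i < 6) (nuK K i x).2 * lbar k D sin K mu i x).

Definition mC {R : realType} (k D sin : R) (K : nat -> R) (mu : R -> R)
  (x : R * R) : R * R :=
  (\sum_(1 <= i < 6) (nu K i).1 * lbar k D sin K mu i x,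
   \sum_(1 <= i < 6) (nu K i).2 * lbar k D sin K mu i x).

Definition fchem {R : realType} (k D sin : R) (mu : R -> R) (x : R * R) : R * R :=
  let b := x.1 in let s := x.2 in
  (mu s * b - D * b, - k * mu s * b + D * (sin - s)).

Definition Kmin {R : realType} (K : nat -> R) : R :=
  Num.min (K 1%N) (Num.min (K 2%N) (Num.min (K 3%N) (Num.min (K 4%N) (K 5%N)))).

Definition RK {R : realType} (K : nat -> R) (x : R * R) : Prop :=
  0 <= x.1 /\ 0 <= x.2 /\
  (x.1 <= (K 4%N)^-1 \/ x.2 <= (K 2%N)^-1 \/ x.2 <= (K 5%N)^-1).

Definition Rplus2 {R : realType} (x : R * R) : Prop := 0 <= x.1 /\ 0 <= x.2.

From HB Require Import structures.
From mathcomp Require Import all_boot all_order all_algebra.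
From mathcomp Require Import all_classical all_reals topology normedtype derive.
From mathcomp Require Import ring lra.
Import numFieldNormedType.Exports.
Import Order.TTheory GRing.Theory Num.Theory.
Local Open Scope ring_scope.
Local Open Scope classical_set_scope.

(* The state-dependent jump min(1, K y)/K differs from the constant jump 1/K
   by the defect (1 - K y)^+/K, which lies in [0, 1/K] and vanishes once
   K y >= 1.  Multiplying by the rates, f_K - f is exactly the sum of the
   three nonnegative terms (1 - K_i y)^+ lambda_i / K_i, and m_K - m is a
   convex combination, with weights bar lambda_i, of defects.  Outside R_K all
   defects vanish.  In particular f_K = f as soon as every K_i exceeds 1/b and
   1/s, and on a compact subset of the open quadrant these thresholds are
   bounded because both coordinates stay away from 0. *)

Lemma compact_pos_lower_bound (T : topologicalType) (R : realType)
    (p : T -> R) (A : set T) :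
  continuous p -> compact A -> (forall x, A x -> 0 < p x) ->
  exists2 d : R, 0 < d & forall x, A x -> d <= p x.
Proof.
move=> pc cA Ap; have [->|/set0P A0] := eqVneq A set0; first by exists 1.
have [c /set_mem Ac cmin] := compact_EVT_min A0 cA (continuous_subspaceT pc).
by exists (p c) => [|x Ax]; [exact: Ap | apply: cmin; rewrite inE].
Qed.

Lemma big_nat_1_6 (V : nmodType) (F : nat -> V) :
  \sum_(1 <= i < 6) F i = F 1%N + F 2%N + F 3%N + F 4%N + F 5%N.
Proof. by do 4 rewrite big_nat_recr //=; rewrite big_nat1. Qed.

Section PlaneVectors.
Context {R : realType}.
Implicit Types (a c : R) (u v : R * R).

Lemma vnorm0l c : vnorm (0, c) = `|c|.
Proof. by rewrite /vnorm /= expr0n /= add0r sqrtr_sqr. Qed.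

Lemma vnorm0r a : vnorm (a, 0) = `|a|.
Proof. by rewrite /vnorm /= expr0n /= addr0 sqrtr_sqr. Qed.

Lemma vnorm_le_normD a c : vnorm (a, c) <= `|a| + `|c|.
Proof.
rewrite /vnorm /= -(ger0_norm (addr_ge0 (normr_ge0 a) (normr_ge0 c))).
rewrite -sqrtr_sqr ler_wsqrtr // sqrrD -(real_normK (num_real a)).
rewrite -(real_normK (num_real c)).
have := mulr_ge0 (normr_ge0 a) (normr_ge0 c); lra.
Qed.

Lemma vsubxx u : vsub u u = (0, 0).
Proof. by rewrite /vsub !subrr. Qed.

Lemma vsub_eq0 u v : vsub u v = (0, 0) -> u = v.
Proof.
by case: u v => [a c] [a' c'] [/eqP + /eqP]; rewrite !subr_eq0 => /eqP -> /eqP ->.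
Qed.

End PlaneVectors.

Section PositivePart.
Context {R : realType}.
Implicit Types a y K : R.

Lemma pospart_ge0 a : 0 <= pospart a.
Proof. by rewrite /pospart le_max lexx orbT. Qed.

Lemma pospart_one_sub_le1 a : 0 <= a -> pospart (1 - a) <= 1.
Proof. by move=> a0; rewrite /pospart ge_max ler01 andbT; lra. Qed.

Lemma pospart_one_sub_eq0 a : 1 <= a -> pospart (1 - a) = 0.
Proof. by move=> a1; rewrite /pospart max_r // subr_le0. Qed.

Lemma one_sub_min1 a : 1 - Num.min 1 a = pospart (1 - a).
Proof.
rewrite /pospart; have [a1|a1] := leP 1 a.
  by rewrite subrr max_r // subr_le0.
by rewrite max_l // subr_ge0 ltW.
Qed.

Lemma truncated_jumpE K y :
  Num.min 1 (K * y) / K = K^-1 - pospart (1 - K * y) / K.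
Proof. by rewrite -one_sub_min1; ring. Qed.

Lemma jump_defect_bounds K y : 0 < K -> 0 <= y ->
  0 <= pospart (1 - K * y) / K <= K^-1.
Proof.
move=> K0 y0; rewrite divr_ge0 ?pospart_ge0 ?(ltW K0) //= -[leRHS]mul1r.
rewrite ler_wpM2r ?invr_ge0 ?(ltW K0) // pospart_one_sub_le1 //.
exact: mulr_ge0 (ltW K0) y0.
Qed.

Lemma pospart_one_sub_mul_eq0 K y : 0 < y -> y^-1 <= K ->
  pospart (1 - K * y) = 0.
Proof.
move=> y0 yK; apply: pospart_one_sub_eq0.
by rewrite -(mulVf (lt0r_neq0 y0)) ler_wpM2r ?(ltW y0).
Qed.

Lemma invr_le_of_invr_lt K y : 0 < K -> K^-1 < y -> y^-1 <= K.
Proof.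
move=> K0 yK; have y0 : 0 < y by apply: lt_trans yK; rewrite invr_gt0.
by rewrite -[leRHS]invrK lef_pV2 ?posrE ?invr_gt0 // ltW.
Qed.

End PositivePart.

Section Chemostat.
Variables (R : realType) (k D sin : R) (K : nat -> R) (mu : R -> R).
Hypothesis hK : forall i : nat, (1 <= i <= 5)%N -> 0 < K i.
Hypotheses (hk : 0 < k) (hD : 0 < D) (hsin : 0 < sin).
Hypothesis hmunn : forall s : R, 0 <= s -> 0 <= mu s.
Hypothesis hmu0 : mu 0 = 0.

Lemma Kmin_gt0 : 0 < Kmin K.
Proof. by rewrite /Kmin !lt_min !hK. Qed.

Lemma invr_le_Kmin i : (1 <= i <= 5)%N -> (K i)^-1 <= (Kmin K)^-1.
Proof.
move=> hi; rewrite lef_pV2 ?posrE ?hK ?Kmin_gt0 //.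
by case: i hi => [|[|[|[|[|[|i]]]]]] // _; rewrite /Kmin !ge_min lexx ?orbT.
Qed.

Lemma vnorm_nuK_le i x : (1 <= i <= 5)%N -> Rplus2 x ->
  vnorm (nuK K i x) <= vnorm (nu K i).
Proof.
move=> hi [b0 s0]; have jump i' y : (1 <= i' <= 5)%N -> 0 <= y ->
    `|- (Num.min 1 (K i' * y) / K i')| <= `|- (K i')^-1|.
  move=> hi' y0; have Ki := hK _ hi'.
  have /andP[d0 dK] := jump_defect_bounds _ _ Ki y0.
  rewrite !normrN truncated_jumpE !ger0_norm ?invr_ge0 ?(ltW Ki); lra.
by case: i hi => [|[|[|[|[|[|i]]]]]] // _ /=;
  rewrite ?vnorm0l ?vnorm0r ?jump.
Qed.

Lemma vnorm_nuK_sub_nu_le i x : (1 <= i <= 5)%N -> Rplus2 x ->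
  vnorm (vsub (nuK K i x) (nu K i)) <= (Kmin K)^-1.
Proof.
move=> hi [b0 s0]; apply: le_trans (invr_le_Kmin _ hi).
have defect i' y : (1 <= i' <= 5)%N -> 0 <= y ->
    `|- (Num.min 1 (K i' * y) / K i') - - (K i')^-1| <= (K i')^-1.
  move=> hi' y0; have Ki := hK _ hi'.
  have /andP[d0 dK] := jump_defect_bounds _ _ Ki y0.
  by rewrite truncated_jumpE opprB opprK addrNK ger0_norm.
case: i hi => [|[|[|[|[|[|i]]]]]] // hi;
  rewrite /vsub /= ?subrr ?vnorm0l ?vnorm0r ?defect //.
all: by rewrite normr0 invr_ge0 (ltW (hK _ hi)).
Qed.

Lemma fK_sub_fchemE x :
  vsub (fK k D sin K mu x) (fchem k D sin mu x) =
  (pospart (1 - K 4%N * x.1) * D * x.1,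
   pospart (1 - K 2%N * x.2) * k * mu x.2 * x.1
   + pospart (1 - K 5%N * x.2) * D * x.2).
Proof.
have K_neq0 i : (1 <= i <= 5)%N -> K i != 0 by move=> /hK/lt0r_neq0.
rewrite -!one_sub_min1 /vsub /fK /fchem !big_nat_1_6 /=.
by congr pair; field; rewrite !K_neq0.
Qed.

Lemma mK_sub_mCE x :
  vsub (mK k D sin K mu x) (mC k D sin K mu x) =
  (pospart (1 - K 4%N * x.1) / K 4%N * lbar k D sin K mu 4 x,
   pospart (1 - K 2%N * x.2) / K 2%N * lbar k D sin K mu 2 x
   + pospart (1 - K 5%N * x.2) / K 5%N * lbar k D sin K mu 5 x).
Proof.
rewrite /vsub /mK /mC !big_nat_1_6 /= !truncated_jumpE.
by congr pair; ring.
Qed.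

Lemma not_RK_lt x : Rplus2 x -> ~ RK K x ->
  [/\ (K 4%N)^-1 < x.1, (K 2%N)^-1 < x.2 & (K 5%N)^-1 < x.2].
Proof.
move=> [b0 s0] nR; split; rewrite ltNge; apply/negP => h; apply: nR;
  do 2!split => //; tauto.
Qed.

Lemma nuK_eq_nu_outside_RK i x : Rplus2 x -> ~ RK K x -> nuK K i x = nu K i.
Proof.
move=> hx /(not_RK_lt _ hx)[b4 s2 s5].
have trunc1 i' y : (1 <= i' <= 5)%N -> (K i')^-1 < y ->
    Num.min 1 (K i' * y) / K i' = (K i')^-1.
  move=> hi' yK; have Ki := hK _ hi'.
  have y0 : 0 < y by apply: lt_trans yK; rewrite invr_gt0.
  by rewrite truncated_jumpE pospart_one_sub_mul_eq0 ?invr_le_of_invr_lt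
    ?mul0r ?subr0.
by case: i => [|[|[|[|[|[|i]]]]]] //=; rewrite trunc1.
Qed.

Lemma mK_eq_mC_outside_RK x : Rplus2 x -> ~ RK K x ->
  mK k D sin K mu x = mC k D sin K mu x.
Proof.
move=> hx nR; rewrite /mK /mC.
by congr pair; apply: eq_bigr => i _; rewrite nuK_eq_nu_outside_RK.
Qed.

Lemma fK_eq_fchem_of_inv_le x : Rplus2 x ->
  x.1^-1 <= K 4%N -> x.2^-1 <= K 2%N -> x.2^-1 <= K 5%N ->
  fK k D sin K mu x = fchem k D sin mu x.
Proof.
move=> [b0 s0] hb h2 h5; apply: vsub_eq0; rewrite fK_sub_fchemE.
have -> : pospart (1 - K 4%N * x.1) * D * x.1 = 0.
  move: b0; rewrite le_eqVlt => /predU1P[<-|b_gt0]; first by rewrite mulr0.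
  by rewrite pospart_one_sub_mul_eq0 // !mul0r.
move: s0; rewrite le_eqVlt => /predU1P[<-|s_gt0].
  by rewrite hmu0 !mulr0 mul0r addr0.
by rewrite !pospart_one_sub_mul_eq0 // !mul0r addr0.
Qed.

Lemma fK_eq_fchem_outside_RK x : Rplus2 x -> ~ RK K x ->
  fK k D sin K mu x = fchem k D sin mu x.
Proof.
move=> hx /(not_RK_lt _ hx)[b4 s2 s5].
by apply: fK_eq_fchem_of_inv_le; rewrite ?invr_le_of_invr_lt ?hK.
Qed.

Lemma lam_ge0 i x : Rplus2 x -> 0 <= lam k D sin K mu i x.
Proof.
move=> [b0 s0]; have mu0 := hmunn _ s0.
case: i => [|[|[|[|[|[|i]]]]]] //=;
  rewrite !mulr_ge0 ?(ltW hk) ?(ltW hD) ?(ltW hsin) //; by apply/ltW/hK.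
Qed.

Lemma lamTE x : lamT k D sin K mu x = lam k D sin K mu 1 x + lam k D sin K mu 2 x
  + lam k D sin K mu 3 x + lam k D sin K mu 4 x + lam k D sin K mu 5 x.
Proof. exact: big_nat_1_6. Qed.

Lemma lamT_gt0 x : Rplus2 x -> 0 < lamT k D sin K mu x.
Proof.
move=> hx; have lam3 : 0 < lam k D sin K mu 3 x by rewrite /= !mulr_gt0 ?hK.
have := lam_ge0 1 _ hx; have := lam_ge0 2 _ hx; have := lam_ge0 4 _ hx.
have := lam_ge0 5 _ hx; rewrite lamTE; lra.
Qed.

Lemma lbar_ge0 i x : Rplus2 x -> 0 <= lbar k D sin K mu i x.
Proof. by move=> hx; rewrite /lbar divr_ge0 ?lam_ge0 ?(ltW (lamT_gt0 _ hx)). Qed.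

Lemma lbar_sum1 x : Rplus2 x ->
  lbar k D sin K mu 1 x + lbar k D sin K mu 2 x + lbar k D sin K mu 3 x
  + lbar k D sin K mu 4 x + lbar k D sin K mu 5 x = 1.
Proof.
move=> hx; have := lt0r_neq0 (lamT_gt0 _ hx).
by rewrite /lbar lamTE => T0; field.
Qed.

Lemma vnorm_mK_sub_mC_le x : Rplus2 x ->
  vnorm (vsub (mK k D sin K mu x) (mC k D sin K mu x)) <= (Kmin K)^-1.
Proof.
move=> hx; have [b0 s0] := hx.
have term i y : (1 <= i <= 5)%N -> 0 <= y ->
    0 <= pospart (1 - K i * y) / K i * lbar k D sin K mu i x
      <= (Kmin K)^-1 * lbar k D sin K mu i x.
  move=> hi y0; have /andP[d0 dK] := jump_defect_bounds _ _ (hK _ hi) y0.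
  rewrite mulr_ge0 ?lbar_ge0 //= ler_wpM2r ?lbar_ge0 //.
  exact: le_trans dK (invr_le_Kmin _ hi).
have /andP[t20 t2] := term 2%N _ isT s0; have /andP[t40 t4] := term 4%N _ isT b0.
have /andP[t50 t5] := term 5%N _ isT s0.
have Kmin_inv0 : 0 <= (Kmin K)^-1 by rewrite invr_ge0 (ltW Kmin_gt0).
have l1 := mulr_ge0 Kmin_inv0 (lbar_ge0 1 _ hx).
have l3 := mulr_ge0 Kmin_inv0 (lbar_ge0 3 _ hx).
have Kmin_invE : (Kmin K)^-1 = (Kmin K)^-1 * lbar k D sin K mu 1 x
    + (Kmin K)^-1 * lbar k D sin K mu 2 x + (Kmin K)^-1 * lbar k D sin K mu 3 x
    + (Kmin K)^-1 * lbar k D sin K mu 4 x + (Kmin K)^-1 * lbar k D sin K mu 5 x.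
  by rewrite -!mulrDr lbar_sum1 ?mulr1.
rewrite mK_sub_mCE; apply: le_trans (vnorm_le_normD _ _) _.
rewrite !ger0_norm ?addr_ge0 //; lra.
Qed.

Lemma vnorm_fK_sub_fchem_le x : Rplus2 x ->
  vnorm (vsub (fK k D sin K mu x) (fchem k D sin mu x)) <=
    pospart (1 - K 2%N * x.2) * k * mu x.2 * x.1
    + pospart (1 - K 4%N * x.1) * D * x.1
    + pospart (1 - K 5%N * x.2) * D * x.2.
Proof.
move=> [b0 s0]; rewrite fK_sub_fchemE; apply: le_trans (vnorm_le_normD _ _) _.
rewrite !ger0_norm ?addr_ge0 ?mulr_ge0 ?pospart_ge0 ?hmunn ?(ltW hk) ?(ltW hD) //.
by rewrite addrCA addrA.
Qed.

End Chemostat.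

Lemma fK_eq_fchem_of_ge (R : realType) (k D sin M : R) (K : nat -> R)
    (mu : R -> R) (x : R * R) :
  mu 0 = 0 -> (forall i : nat, (1 <= i <= 5)%N -> 0 < K i /\ M <= K i) ->
  Rplus2 x -> x.1^-1 <= M -> x.2^-1 <= M ->
  fK k D sin K mu x = fchem k D sin mu x.
Proof.
move=> hmu0 hKM hx hb hs.
have hK i : (1 <= i <= 5)%N -> 0 < K i by move=> /hKM[].
have le_K i y : (1 <= i <= 5)%N -> y <= M -> y <= K i.
  by move=> /hKM[_ MK] yM; apply: le_trans MK.
by apply: fK_eq_fchem_of_inv_le => //; apply: le_K.
Qed.

Theorem lemma1 (R : realType) (k D sin mumax : R) (K : nat -> R) (mu : R -> R)
  (hk : 0 < k) (hD : 0 < D) (hsin : 0 < sin)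
  (hK : forall i : nat, (1 <= i <= 5)%N -> 0 < K i)
  (hmu0 : mu 0 = 0)
  (hmupos : forall s : R, 0 < s -> 0 < mu s)
  (hmunn : forall s : R, 0 <= s -> 0 <= mu s)
  (hmumax : forall s : R, 0 <= s -> mu s <= mumax)
  (hmucont : forall e : R, 0 < e ->
     exists2 d : R, 0 < d & forall s : R, 0 <= s < d -> `|mu s - mu 0| < e) :
  (forall (i : nat) (x : R * R), (1 <= i <= 5)%N -> Rplus2 x ->
     vnorm (nuK K i x) <= vnorm (nu K i)) /\
  (forall x : R * R, Rplus2 x -> ~ RK K x ->
     (forall i : nat, (1 <= i <= 5)%N -> nuK K i x = nu K i) /\
     mK k D sin K mu x = mC k D sin K mu x /\
     fK k D sin K mu x = fchem k D sin mu x) /\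
  (forall x : R * R, Rplus2 x ->
     (forall i : nat, (1 <= i <= 5)%N ->
        vnorm (vsub (nuK K i x) (nu K i)) <= (Kmin K)^-1) /\
     vnorm (vsub (mK k D sin K mu x) (mC k D sin K mu x)) <= (Kmin K)^-1 /\
     vnorm (vsub (fK k D sin K mu x) (fchem k D sin mu x)) <=
       pospart (1 - K 2%N * x.2) * k * mu x.2 * x.1
       + pospart (1 - K 4%N * x.1) * D * x.1
       + pospart (1 - K 5%N * x.2) * D * x.2) /\
  (forall x : R * R, Rplus2 x ->
     forall e : R, 0 < e -> exists M : R, forall K' : nat -> R,
       (forall i : nat, (1 <= i <= 5)%N -> 0 < K' i /\ M <= K' i) ->
       vnorm (vsub (fK k D sin K' mu x) (fchem k D sin mu x)) <= e) /\
  (forall A : set (R * R), compact A -> A `<=` [set x | 0 < x.1 /\ 0 < x.2] ->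
     forall e : R, 0 < e -> exists M : R, forall K' : nat -> R,
       (forall i : nat, (1 <= i <= 5)%N -> 0 < K' i /\ M <= K' i) ->
       forall x : R * R, A x ->
         vnorm (vsub (fK k D sin K' mu x) (fchem k D sin mu x)) <= e).
Proof.
split; first exact: vnorm_nuK_le.
split.
  move=> x hx nR; split; first by move=> i _; exact: nuK_eq_nu_outside_RK.
  by split; [exact: mK_eq_mC_outside_RK | exact: fK_eq_fchem_outside_RK].
split.
  move=> x hx; split; first by move=> i hi; exact: vnorm_nuK_sub_nu_le.
  by split; [exact: vnorm_mK_sub_mC_le | exact: vnorm_fK_sub_fchem_le].
have fK_close e M K' x : 0 < e ->
    (forall i : nat, (1 <= i <= 5)%N -> 0 < K' i /\ M <= K' i) ->
    Rplus2 x -> x.1^-1 <= M -> x.2^-1 <= M ->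
    vnorm (vsub (fK k D sin K' mu x) (fchem k D sin mu x)) <= e.
  move=> e0 hKM hx hb hs.
  rewrite (fK_eq_fchem_of_ge R k D sin M K' mu x hmu0 hKM hx hb hs).
  by rewrite vsubxx vnorm0l normr0 ltW.
split.
  move=> x hx e e0; exists (Num.max x.1^-1 x.2^-1) => K' hKM.
  by apply: fK_close hKM hx _ _; rewrite // le_max lexx ?orbT.
move=> A cA sA e e0.
have fst_cont : continuous (@fst R R) by move=> ?; exact: cvg_fst.
have snd_cont : continuous (@snd R R) by move=> ?; exact: cvg_snd.
have [d1 d10 Ad1] :=
  compact_pos_lower_bound _ _ _ _ fst_cont cA (fun x Ax => (sA x Ax).1).
have [d2 d20 Ad2] :=
  compact_pos_lower_bound _ _ _ _ snd_cont cA (fun x Ax => (sA x Ax).2).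
exists (Num.max d1^-1 d2^-1) => K' hKM x Ax; have [b0 s0] := sA x Ax.
apply: fK_close hKM _ _ _ => //; first by split; exact: ltW.
  by rewrite le_max lef_pV2 ?posrE ?Ad1.
by rewrite le_max [x.2^-1 <= d2^-1]lef_pV2 ?posrE ?Ad2 ?orbT.
Qed.
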